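(* In the setting described in the context, for all meta-contexts $\Delta$, LF contexts $\Psi,\Phi$, computation contexts $\Gamma,\Gamma'$: (a) If $\Delta;\Psi\xRightarrow{u}A$ then $\Delta;\Psi\Longrightarrow A$. (b) If $\Delta;\Psi\xRightarrow{u}\sigma{:}\Phi$ then $\Delta;\Psi\Longrightarrow\sigma{:}\Phi$. (c) If $\Delta;\Psi > x{:}A \rightrightarrows P$ then $\Delta;\Psi,x{:}A\Longrightarrow P$. (d) If $\Delta > X{:}U;\Psi\rightrightarrows P$ then $\Delta,X{:}U;\Psi\Longrightarrow P$. (e) If $\Delta;\Gamma\xRightarrow{R}\tau$ then $\Delta;\Gamma\Longrightarrow\tau$. (f) If $\Delta;\Gamma\gg\Gamma'\xRightarrow{L}[\Psi\vdash P]$ then $\Delta;\Gamma,\Gamma'\Longrightarrow[\Psi\vdash P]$. (g) If $\Delta;\Gamma > y{:}\tau\Rightarrow[\Psi\vdash P]$ then $\Delta;\Gamma,y{:}\tau\Longrightarrow[\Psi\vdash P]$.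
   Context: Setting: the core of the two-level logic of the proof assistant Beluga. A global signature $\Sigma$ of constant declarations $\mathbf{c}{:}A$ is fixed. Syntax: atomic LF types $P,Q ::= \mathbf{a}\,M_1\dots M_n$; LF types $A,B ::= P \mid \Pi x{:}A.\,B$, written $A\rightarrow B$ when $x$ does not occur in $B$ and $\Pi\hat{x}{:}A.\,B$ when it does. Neutral terms $R ::= x \mid \mathbf{c} \mid R\,N \mid u[\sigma]$; normal terms $M,N ::= R \mid \lambda x.\,M$; substitutions $\sigma ::= \cdot \mid \mathsf{wk}_\psi \mid \sigma, M$. LF contexts $\Psi,\Phi ::= \cdot \mid \Psi, x{:}A \mid \Psi,\hat{x}{:}A \mid \psi$ ($x{:}A$ proof-relevant assumption, $\hat{x}{:}A$ parameter, $\psi$ context variable). Meta-terms $C ::= (\hat\Psi\vdash R) \mid \Psi$; meta-types $U ::= (\Psi\vdash P) \mid G$ ($G$ a context schema); meta-contexts $\Delta ::= \cdot \mid \Delta, X{:}U$. Computation types $\tau ::= [\Psi\vdash P] \mid \tau_1\rightarrow\tau_2 \mid \Pi^{\Box}X{:}U.\,\tau$ (types $[\Psi\vdash P]$ are called box types); computation contexts $\Gamma ::= \cdot \mid \Gamma, y{:}\tau$ (order immaterial). $[\sigma]B$: hereditary application of a simultaneous substitution; $[M/\hat{x}]B$: hereditary substitution; $[\![C/X]\!]\tau$: meta-substitution. $\Delta;\Psi\vdash M\Leftarrow A$: standard checking judgment for canonical contextual LF; $\Delta\Vdash C\Leftarrow U$: checking judgment for meta-terms. Sequent calculus for contextual LF,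 $\Delta;\Psi\Longrightarrow A$: (init$^\Sigma$) $\Delta;\Psi\Longrightarrow A$ if $\mathbf{c}{:}A\in\Sigma$; (init$^\Psi$) $\Delta;\Psi,x{:}A\Longrightarrow A$ for proof-relevant $x$; ($\Pi R$) from $\Delta;\Psi,\hat{x}{:}A\Longrightarrow B$ infer $\Delta;\Psi\Longrightarrow\Pi\hat{x}{:}A.\,B$; ($\Pi L$) if $x_1{:}\Pi\hat{x}{:}A.\,B\in\Psi$, $\Delta;\Psi\vdash M\Leftarrow A$, $\Delta;\Psi,x_2{:}[M/\hat{x}]B\Longrightarrow A'$ then $\Delta;\Psi\Longrightarrow A'$; ($\rightarrow R$) from $\Delta;\Psi,x{:}A\Longrightarrow B$ infer $\Delta;\Psi\Longrightarrow A\rightarrow B$; ($\rightarrow L$) if $x_1{:}A\rightarrow B\in\Psi$, $\Delta;\Psi\Longrightarrow A$, $\Delta;\Psi,x_2{:}B\Longrightarrow A'$ then $\Delta;\Psi\Longrightarrow A'$; (reflect) if $u{:}(\Phi\vdash P)\in\Delta$, $\Delta;\Psi\Longrightarrow\sigma{:}\Phi$, $\Delta;\Psi,x{:}[\sigma]P\Longrightarrow A$ then $\Delta;\Psi\Longrightarrow A$. Substitutions $\Delta;\Psi\Longrightarrow\sigma{:}\Phi$: $\Delta;\Psi\Longrightarrow\cdot{:}\cdot$; $\Delta;\psi,\Psi\Longrightarrow\mathsf{wk}_\psi{:}\psi$; from $\Delta;\Psi\Longrightarrow\sigma{:}\Phi$ and $\Delta;\Psi\Longrightarrow N{:}[\sigma]B$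 infer $(\sigma,N){:}(\Phi,x{:}B)$; from $\Delta;\Psi\Longrightarrow\sigma{:}\Phi$ and $\Delta;\Psi\vdash M\Leftarrow[\sigma]B$ infer $(\sigma,M){:}(\Phi,\hat{x}{:}B)$. Sequent calculus for computations, $\Delta;\Gamma\Longrightarrow\tau$: ($\Pi^\Box R$) from $\Delta,X{:}U;\Gamma\Longrightarrow\tau$ infer $\Delta;\Gamma\Longrightarrow\Pi^\Box X{:}U.\,\tau$; ($\Pi^\Box L$) if $y_1{:}\Pi^\Box X{:}U.\,\tau'\in\Gamma$, $\Delta\Vdash C\Leftarrow U$, $\Delta;\Gamma,y_2{:}[\![C/X]\!]\tau'\Longrightarrow\tau$ then $\Delta;\Gamma\Longrightarrow\tau$; ($\rightarrow L$) if $y_1{:}\tau_1\rightarrow\tau_2\in\Gamma$, $\Delta;\Gamma\Longrightarrow\tau_1$, $\Delta;\Gamma,y_2{:}\tau_2\Longrightarrow\tau$ then $\Delta;\Gamma\Longrightarrow\tau$; ($\rightarrow R$) from $\Delta;\Gamma,y{:}\tau_1\Longrightarrow\tau_2$ infer $\Delta;\Gamma\Longrightarrow\tau_1\rightarrow\tau_2$; (init) $\Delta;\Gamma,y{:}\tau\Longrightarrow\tau$; ($\Box R$) from $\Delta;\Psi\Longrightarrow P$ infer $\Delta;\Gamma\Longrightarrow[\Psi\vdash P]$; ($\Box L$) if $y{:}[\Psi\vdash P]\in\Gamma$ and $\Delta,X{:}(\Psi\vdash P);\Gamma\Longrightarrow\tau$ then $\Delta;\Gamma\Longrightarrow\tau$.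 Focusing calculus for LF. Uniform judgment $\Delta;\Psi\xRightarrow{u}A$: ($\Pi R$) from $\Delta;\Psi,\hat{x}{:}A\xRightarrow{u}B$ infer $\Delta;\Psi\xRightarrow{u}\Pi\hat{x}{:}A.\,B$; ($\rightarrow R$) from $\Delta;\Psi,x{:}A\xRightarrow{u}B$ infer $\Delta;\Psi\xRightarrow{u}A\rightarrow B$; (transition$^\Delta$) if $X{:}(\Phi\vdash Q)\in\Delta$, $\Delta;\Psi\xRightarrow{u}\sigma{:}\Phi$ and $[\sigma]Q=P$ then $\Delta;\Psi\xRightarrow{u}P$; (transition$^\Psi$) if $x{:}A\in\Psi$ and $\Delta;\Psi>x{:}A\rightrightarrows P$ then $\Delta;\Psi\xRightarrow{u}P$. Uniform substitutions $\Delta;\Psi\xRightarrow{u}\sigma{:}\Phi$: same four rules as the sequent substitution judgment with $\Longrightarrow$ replaced by $\xRightarrow{u}$ (the $\hat{x}$ case still uses $\Delta;\Psi\vdash M\Leftarrow[\sigma]B$). Focused judgment $\Delta;\Psi>x{:}A\rightrightarrows P$: (init$^\Psi$) $\Delta;\Psi>x{:}P\rightrightarrows P$; ($\rightarrow L$) from $\Delta;\Psi\xRightarrow{u}A$ and $\Delta;\Psi>x'{:}B\rightrightarrows P$ infer $\Delta;\Psi>x{:}A\rightarrow B\rightrightarrows P$; ($\Pi L$) from $\Delta;\Psi\vdash M\Leftarrow A$ and $\Delta;\Psi>x'{:}[M/\hat{x}]B\rightrightarrows P$ infer $\Delta;\Psi>x{:}\Pi\hat{x}{:}A.\,B\rightrightarrows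 P$. Focus on a meta-assumption: $\Delta>X{:}U;\Psi\rightrightarrows P$ holds iff $U=(\Phi\vdash Q)$ and there is $\sigma$ with $\Delta,X{:}U;\Psi\xRightarrow{u}\sigma{:}\Phi$ and $[\sigma]Q=P$. Focusing calculus for computations. Uniform right $\Delta;\Gamma\xRightarrow{R}\tau$: ($\rightarrow R$) from $\Delta;\Gamma,y{:}\tau_1\xRightarrow{R}\tau_2$ infer $\Delta;\Gamma\xRightarrow{R}\tau_1\rightarrow\tau_2$; ($\Pi^\Box R$) from $\Delta,X{:}U;\Gamma\xRightarrow{R}\tau$ infer $\Delta;\Gamma\xRightarrow{R}\Pi^\Box X{:}U.\,\tau$; (left to right) from $\Delta;\cdot\gg\Gamma\xRightarrow{L}[\Psi\vdash P]$ infer $\Delta;\Gamma\xRightarrow{R}[\Psi\vdash P]$. Uniform left $\Delta;\Gamma\gg\Gamma'\xRightarrow{L}[\Psi\vdash P]$: ($\Box L$) from $\Delta,X{:}(\Phi\vdash Q);\Gamma\gg\Gamma'\xRightarrow{L}[\Psi\vdash P]$ infer $\Delta;\Gamma\gg\Gamma',y{:}[\Phi\vdash Q]\xRightarrow{L}[\Psi\vdash P]$; (shift) if $\tau$ is not a box type and $\Delta;\Gamma,y{:}\tau\gg\Gamma'\xRightarrow{L}[\Psi\vdash P]$ then $\Delta;\Gamma\gg\Gamma',y{:}\tau\xRightarrow{L}[\Psi\vdash P]$; (level) from $\Delta;\Psi\xRightarrow{u}P$ infer $\Delta;\Gamma\gg\cdot\xRightarrow{L}[\Psi\vdash P]$;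 (focus) if $y{:}\tau\in\Gamma$ and $\Delta;\Gamma>y{:}\tau\Rightarrow[\Psi\vdash P]$ then $\Delta;\Gamma\gg\cdot\xRightarrow{L}[\Psi\vdash P]$. Focused $\Delta;\Gamma>y{:}\tau\Rightarrow[\Psi\vdash P]$: ($\Pi^\Box L$) from $\Delta\Vdash C\Leftarrow U$ and $\Delta;\Gamma>y'{:}[\![C/X]\!]\tau\Rightarrow[\Psi\vdash P]$ infer $\Delta;\Gamma>y{:}\Pi^\Box X{:}U.\,\tau\Rightarrow[\Psi\vdash P]$; ($\rightarrow L$) from $\Delta;\Gamma\xRightarrow{R}\tau_1$ and $\Delta;\Gamma>y'{:}\tau_2\Rightarrow[\Psi\vdash P]$ infer $\Delta;\Gamma>y{:}\tau_1\rightarrow\tau_2\Rightarrow[\Psi\vdash P]$; (blur) from $\Delta;\cdot\gg\Gamma,y'{:}[\Phi\vdash Q]\xRightarrow{L}[\Psi\vdash P]$ infer $\Delta;\Gamma>y'{:}[\Phi\vdash Q]\Rightarrow[\Psi\vdash P]$. *)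

(* Representation: locally nameless.  Bound LF variables (lambda / Pi-hat)
   are de Bruijn indices, free LF variables are names; bound meta-variables
   (Pi-box) are de Bruijn indices [MB n], free meta-variables are names [MF X].
   "Fresh name" premises are stated with cofinite quantification. *)
From Stdlib Require Import List Arith PeanoNat.
Import ListNotations.

Definition name := nat.

(* meta-variable references (also used for context variables psi) *)
Inductive mv : Type := MB (n : nat) | MF (X : name).

(* R ::= x | c | R N | u[sigma] ;  M ::= R | lam x. M ; sigma ::= . | wk_psi | sigma, M *)
Inductive neu : Type :=
| BVar (n : nat)
| FVar (x : name)
| Const (c : name)
| App (R : neu) (N : nrm)
| MVar (u : mv) (s : sub)
with nrm : Type :=
| NRet (R : neu)
| Lam (M : nrm)
with sub : Type :=
| SNil
| SWk (psi : mv)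
| SCons (s : sub) (M : nrm).

Inductive atyp : Type := ATm (a : name) (Ms : list nrm).

(* A ::= P | Pi x^:A. B (B binds index 0) | A -> B (non-dependent) *)
Inductive typ : Type :=
| TAtom (P : atyp)
| PiP (A : typ) (B : typ)
| Arr (A : typ) (B : typ).

(* Rel: proof-relevant assumption x:A ;  Par: parameter x^:A *)
Inductive kind : Type := Rel | Par.

Inductive lctx : Type :=
| CNil
| CVar (psi : mv)
| CExt (Psi : lctx) (x : name) (k : kind) (A : typ).

Inductive hctx : Type :=
| HNil
| HVar (psi : mv)
| HExt (h : hctx) (x : name).

(* U ::= (Psi |- P) | G   (context schemas G are referred to by name) *)
Inductive mtyp : Type :=
| MTyp (Psi : lctx) (P : atyp)
| MSch (G : name).

Inductive mterm : Type :=
| CTm (h : hctx) (R : neu)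
| CCtx (Psi : lctx).

(* tau ::= [Psi |- P] | tau1 -> tau2 | Pi^box X:U. tau  (binds meta index 0) *)
Inductive ctyp : Type :=
| Box (Psi : lctx) (P : atyp)
| CArr (t1 t2 : ctyp)
| PiBox (U : mtyp) (t : ctyp).

(* Delta, X:U  is  (X,U) :: Delta ;  Gamma, y:tau  is  (y,tau) :: Gamma *)
Definition mctx := list (name * mtyp).
Definition cctx := list (name * ctyp).
Definition signature := list (name * typ).

Fixpoint lin (Psi : lctx) (x : name) (k : kind) (A : typ) : Prop :=
  match Psi with
  | CExt Psi' y k' B => (y = x /\ k' = k /\ B = A) \/ lin Psi' x k A
  | _ => False
  end.

Fixpoint root (Psi : lctx) : option mv :=
  match Psi with
  | CNil => None
  | CVar psi => Some psi
  | CExt Psi' _ _ _ => root Psi'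
  end.

Fixpoint hat (Psi : lctx) : hctx :=
  match Psi with
  | CNil => HNil
  | CVar psi => HVar psi
  | CExt Psi' x _ _ => HExt (hat Psi') x
  end.

Fixpoint lift_neu (c : nat) (R : neu) : neu :=
  match R with
  | BVar n => if n <? c then BVar n else BVar (S n)
  | FVar x => FVar x
  | Const a => Const a
  | App R N => App (lift_neu c R) (lift_nrm c N)
  | MVar u s => MVar u (lift_sub c s)
  end
with lift_nrm (c : nat) (M : nrm) : nrm :=
  match M with
  | NRet R => NRet (lift_neu c R)
  | Lam M => Lam (lift_nrm (S c) M)
  end
with lift_sub (c : nat) (s : sub) : sub :=
  match s with
  | SNil => SNil
  | SWk p => SWk p
  | SCons s M => SCons (lift_sub c s) (lift_nrm c M)
  end.

Definition liftn (d : nat) (N : nrm) : nrm := Nat.iter d (lift_nrm 0) N.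

Fixpoint open_neu (k : nat) (x : name) (R : neu) : neu :=
  match R with
  | BVar n => if n =? k then FVar x else BVar n
  | FVar y => FVar y
  | Const a => Const a
  | App R N => App (open_neu k x R) (open_nrm k x N)
  | MVar u s => MVar u (open_sub k x s)
  end
with open_nrm (k : nat) (x : name) (M : nrm) : nrm :=
  match M with
  | NRet R => NRet (open_neu k x R)
  | Lam M => Lam (open_nrm (S k) x M)
  end
with open_sub (k : nat) (x : name) (s : sub) : sub :=
  match s with
  | SNil => SNil
  | SWk p => SWk p
  | SCons s M => SCons (open_sub k x s) (open_nrm k x M)
  end.

Definition open_atyp (k : nat) (x : name) (P : atyp) : atyp :=
  match P with ATm a Ms => ATm a (map (open_nrm k x) Ms) end.

Fixpoint open_typ (k : nat) (x : name) (A : typ) : typ :=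
  match A with
  | TAtom P => TAtom (open_atyp k x P)
  | PiP A B => PiP (open_typ k x A) (open_typ (S k) x B)
  | Arr A B => Arr (open_typ k x A) (open_typ k x B)
  end.

Definition mopen_mv (k : nat) (X : name) (u : mv) : mv :=
  match u with
  | MB n => if n =? k then MF X else MB n
  | MF Y => MF Y
  end.

Fixpoint mopen_neu (k : nat) (X : name) (R : neu) : neu :=
  match R with
  | BVar n => BVar n
  | FVar y => FVar y
  | Const a => Const a
  | App R N => App (mopen_neu k X R) (mopen_nrm k X N)
  | MVar u s => MVar (mopen_mv k X u) (mopen_sub k X s)
  end
with mopen_nrm (k : nat) (X : name) (M : nrm) : nrm :=
  match M with
  | NRet R => NRet (mopen_neu k X R)
  | Lam M => Lam (mopen_nrm k X M)
  end
with mopen_sub (k : nat) (X : name) (s : sub) : sub :=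
  match s with
  | SNil => SNil
  | SWk p => SWk (mopen_mv k X p)
  | SCons s M => SCons (mopen_sub k X s) (mopen_nrm k X M)
  end.

Definition mopen_atyp (k : nat) (X : name) (P : atyp) : atyp :=
  match P with ATm a Ms => ATm a (map (mopen_nrm k X) Ms) end.

Fixpoint mopen_typ (k : nat) (X : name) (A : typ) : typ :=
  match A with
  | TAtom P => TAtom (mopen_atyp k X P)
  | PiP A B => PiP (mopen_typ k X A) (mopen_typ k X B)
  | Arr A B => Arr (mopen_typ k X A) (mopen_typ k X B)
  end.

Fixpoint mopen_lctx (k : nat) (X : name) (Psi : lctx) : lctx :=
  match Psi with
  | CNil => CNil
  | CVar p => CVar (mopen_mv k X p)
  | CExt Psi x kd A => CExt (mopen_lctx k X Psi) x kd (mopen_typ k X A)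
  end.

Definition mopen_mtyp (k : nat) (X : name) (U : mtyp) : mtyp :=
  match U with
  | MTyp Psi P => MTyp (mopen_lctx k X Psi) (mopen_atyp k X P)
  | MSch G => MSch G
  end.

Fixpoint mopen_ctyp (k : nat) (X : name) (t : ctyp) : ctyp :=
  match t with
  | Box Psi P => Box (mopen_lctx k X Psi) (mopen_atyp k X P)
  | CArr t1 t2 => CArr (mopen_ctyp k X t1) (mopen_ctyp k X t2)
  | PiBox U t => PiBox (mopen_mtyp k X U) (mopen_ctyp (S k) X t)
  end.

(* Hereditary substitution (relational).
   [hs_* oi nm d t t'] : t' is the result of hereditarily substituting in t
   (at LF binder depth d) the term N for the bound index d (if oi = Some N;
   higher indices are then decremented) and, simultaneously, the terms of the
   association list nm for the names it declares.
   Results on neutral terms are either neutral ([HNeu]) or a lambda whose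
   body is returned ([HLam]), triggering further hereditary reduction. *)

Inductive hres : Type := HNeu (R : neu) | HLam (M : nrm).

Definition to_hres (M : nrm) : hres :=
  match M with NRet R => HNeu R | Lam M0 => HLam M0 end.

Fixpoint assoc (x : name) (l : list (name * nrm)) : option nrm :=
  match l with
  | [] => None
  | (y, N) :: l => if Nat.eqb x y then Some N else assoc x l
  end.

Inductive hs_neu : option nrm -> list (name * nrm) -> nat -> neu -> hres -> Prop :=
| hs_bvar_low : forall oi nm d n, n < d ->
    hs_neu oi nm d (BVar n) (HNeu (BVar n))
| hs_bvar_none : forall nm d n, d <= n ->
    hs_neu None nm d (BVar n) (HNeu (BVar n))
| hs_bvar_hit : forall N nm d,
    hs_neu (Some N) nm d (BVar d) (to_hres (liftn d N))
| hs_bvar_high : forall N nm d n, d < n ->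
    hs_neu (Some N) nm d (BVar n) (HNeu (BVar (pred n)))
| hs_fvar_hit : forall oi nm d x N, assoc x nm = Some N ->
    hs_neu oi nm d (FVar x) (to_hres (liftn d N))
| hs_fvar_miss : forall oi nm d x, assoc x nm = None ->
    hs_neu oi nm d (FVar x) (HNeu (FVar x))
| hs_const : forall oi nm d c, hs_neu oi nm d (Const c) (HNeu (Const c))
| hs_app_neu : forall oi nm d R N R' N',
    hs_neu oi nm d R (HNeu R') -> hs_nrm oi nm d N N' ->
    hs_neu oi nm d (App R N) (HNeu (App R' N'))
| hs_app_beta : forall oi nm d R N M0 N' M1,
    hs_neu oi nm d R (HLam M0) -> hs_nrm oi nm d N N' ->
    hs_nrm (Some N') [] 0 M0 M1 ->
    hs_neu oi nm d (App R N) (to_hres M1)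
| hs_mvar : forall oi nm d u s s',
    hs_sub oi nm d s s' -> hs_neu oi nm d (MVar u s) (HNeu (MVar u s'))
with hs_nrm : option nrm -> list (name * nrm) -> nat -> nrm -> nrm -> Prop :=
| hs_ret_neu : forall oi nm d R R',
    hs_neu oi nm d R (HNeu R') -> hs_nrm oi nm d (NRet R) (NRet R')
| hs_ret_lam : forall oi nm d R M,
    hs_neu oi nm d R (HLam M) -> hs_nrm oi nm d (NRet R) (Lam M)
| hs_lam : forall oi nm d M M',
    hs_nrm oi nm (S d) M M' -> hs_nrm oi nm d (Lam M) (Lam M')
with hs_sub : option nrm -> list (name * nrm) -> nat -> sub -> sub -> Prop :=
| hs_snil : forall oi nm d, hs_sub oi nm d SNil SNil
| hs_swk : forall oi nm d p, hs_sub oi nm d (SWk p) (SWk p)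
| hs_scons : forall oi nm d s M s' M',
    hs_sub oi nm d s s' -> hs_nrm oi nm d M M' ->
    hs_sub oi nm d (SCons s M) (SCons s' M').

Inductive hs_atyp (oi : option nrm) (nm : list (name * nrm)) (d : nat) :
  atyp -> atyp -> Prop :=
| hs_atm : forall a Ms Ms', Forall2 (hs_nrm oi nm d) Ms Ms' ->
    hs_atyp oi nm d (ATm a Ms) (ATm a Ms').

Inductive hs_typ : option nrm -> list (name * nrm) -> nat -> typ -> typ -> Prop :=
| hs_tatom : forall oi nm d P P', hs_atyp oi nm d P P' ->
    hs_typ oi nm d (TAtom P) (TAtom P')
| hs_pip : forall oi nm d A B A' B',
    hs_typ oi nm d A A' -> hs_typ oi nm (S d) B B' ->
    hs_typ oi nm d (PiP A B) (PiP A' B')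
| hs_arr : forall oi nm d A B A' B',
    hs_typ oi nm d A A' -> hs_typ oi nm d B B' ->
    hs_typ oi nm d (Arr A B) (Arr A' B').

(* [M/x^]B where B is the body of  Pi x^:A. B  (bound index 0) *)
Definition hsubst_typ (M : nrm) (B B' : typ) : Prop := hs_typ (Some M) [] 0 B B'.

Fixpoint sub_map (h : hctx) (s : sub) : list (name * nrm) :=
  match h, s with
  | HExt h' x, SCons s' M => (x, M) :: sub_map h' s'
  | _, _ => []
  end.

(* [sigma]B, for B living in the domain context Phi of sigma *)
Definition ssubst_typ (Phi : lctx) (s : sub) (B B' : typ) : Prop :=
  hs_typ None (sub_map (hat Phi) s) 0 B B'.
Definition ssubst_atyp (Phi : lctx) (s : sub) (P P' : atyp) : Prop :=
  hs_atyp None (sub_map (hat Phi) s) 0 P P'.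

(* eta-expansion and identity substitutions (needed for [[Psi/psi]] wk_psi) *)

Fixpoint eta (A : typ) (R : neu) : nrm :=
  match A with
  | TAtom _ => NRet R
  | PiP A B => Lam (eta B (App (lift_neu 0 R) (eta A (BVar 0))))
  | Arr A B => Lam (eta B (App (lift_neu 0 R) (eta A (BVar 0))))
  end.

Fixpoint idsub (Psi : lctx) : sub :=
  match Psi with
  | CNil => SNil
  | CVar p => SWk p
  | CExt Psi' x _ A => SCons (idsub Psi') (eta A (FVar x))
  end.

Section MSubst.
Variable C : mterm.

Inductive ms_neu (k : nat) : neu -> hres -> Prop :=
| ms_bvar : forall n, ms_neu k (BVar n) (HNeu (BVar n))
| ms_fvar : forall x, ms_neu k (FVar x) (HNeu (FVar x))
| ms_const : forall c, ms_neu k (Const c) (HNeu (Const c))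
| ms_app_neu : forall R N R' N',
    ms_neu k R (HNeu R') -> ms_nrm k N N' -> ms_neu k (App R N) (HNeu (App R' N'))
| ms_app_beta : forall R N M0 N' M1,
    ms_neu k R (HLam M0) -> ms_nrm k N N' -> hs_nrm (Some N') [] 0 M0 M1 ->
    ms_neu k (App R N) (to_hres M1)
| ms_mvar_hit : forall h R0 s s' r,
    C = CTm h R0 -> ms_sub k s s' -> hs_neu None (sub_map h s') 0 R0 r ->
    ms_neu k (MVar (MB k) s) r
| ms_mvar_other : forall u s s',
    u <> MB k -> ms_sub k s s' -> ms_neu k (MVar u s) (HNeu (MVar u s'))
with ms_nrm (k : nat) : nrm -> nrm -> Prop :=
| ms_ret_neu : forall R R', ms_neu k R (HNeu R') -> ms_nrm k (NRet R) (NRet R')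
| ms_ret_lam : forall R M, ms_neu k R (HLam M) -> ms_nrm k (NRet R) (Lam M)
| ms_lam : forall M M', ms_nrm k M M' -> ms_nrm k (Lam M) (Lam M')
with ms_sub (k : nat) : sub -> sub -> Prop :=
| ms_snil : ms_sub k SNil SNil
| ms_swk_hit : forall Psi, C = CCtx Psi -> ms_sub k (SWk (MB k)) (idsub Psi)
| ms_swk_other : forall p, p <> MB k -> ms_sub k (SWk p) (SWk p)
| ms_scons : forall s M s' M',
    ms_sub k s s' -> ms_nrm k M M' -> ms_sub k (SCons s M) (SCons s' M').

Inductive ms_atyp (k : nat) : atyp -> atyp -> Prop :=
| ms_atm : forall a Ms Ms', Forall2 (ms_nrm k) Ms Ms' -> ms_atyp k (ATm a Ms) (ATm a Ms').

Inductive ms_typ (k : nat) : typ -> typ -> Prop :=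
| ms_tatom : forall P P', ms_atyp k P P' -> ms_typ k (TAtom P) (TAtom P')
| ms_pip : forall A B A' B', ms_typ k A A' -> ms_typ k B B' -> ms_typ k (PiP A B) (PiP A' B')
| ms_arr : forall A B A' B', ms_typ k A A' -> ms_typ k B B' -> ms_typ k (Arr A B) (Arr A' B').

Inductive ms_lctx (k : nat) : lctx -> lctx -> Prop :=
| ms_cnil : ms_lctx k CNil CNil
| ms_cvar_hit : forall Psi, C = CCtx Psi -> ms_lctx k (CVar (MB k)) Psi
| ms_cvar_other : forall p, p <> MB k -> ms_lctx k (CVar p) (CVar p)
| ms_cext : forall Psi x kd A Psi' A',
    ms_lctx k Psi Psi' -> ms_typ k A A' -> ms_lctx k (CExt Psi x kd A) (CExt Psi' x kd A').

Inductive ms_mtyp (k : nat) : mtyp -> mtyp -> Prop :=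
| ms_mtyp_ctx : forall Psi P Psi' P', ms_lctx k Psi Psi' -> ms_atyp k P P' ->
    ms_mtyp k (MTyp Psi P) (MTyp Psi' P')
| ms_msch : forall G, ms_mtyp k (MSch G) (MSch G).

Inductive ms_ctyp : nat -> ctyp -> ctyp -> Prop :=
| ms_box : forall k Psi P Psi' P', ms_lctx k Psi Psi' -> ms_atyp k P P' ->
    ms_ctyp k (Box Psi P) (Box Psi' P')
| ms_carr : forall k t1 t2 t1' t2', ms_ctyp k t1 t1' -> ms_ctyp k t2 t2' ->
    ms_ctyp k (CArr t1 t2) (CArr t1' t2')
| ms_pibox : forall k U t U' t', ms_mtyp k U U' -> ms_ctyp (S k) t t' ->
    ms_ctyp k (PiBox U t) (PiBox U' t').
End MSubst.

(* [[C/X]]tau where tau is the body of  Pi^box X:U. tau  (meta index 0) *)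
Definition msubst_ctyp (C : mterm) (t t' : ctyp) : Prop := ms_ctyp C 0 t t'.

Definition is_box (t : ctyp) : Prop :=
  match t with Box _ _ => True | _ => False end.

Section Judgments.
Variable Sigma : signature.
(* checking of a context against a (declared) context schema G *)
Variable schk : mctx -> lctx -> name -> Prop.

(* Delta; Psi |- M <= A,  Delta; Psi |- R => A,  Delta; Psi |- sigma <= Phi *)
Inductive chk : mctx -> lctx -> nrm -> typ -> Prop :=
| chk_lam_arr : forall D Psi M A B (L : list name),
    (forall x, ~ In x L -> chk D (CExt Psi x Rel A) (open_nrm 0 x M) B) ->
    chk D Psi (Lam M) (Arr A B)
| chk_lam_pi : forall D Psi M A B (L : list name),
    (forall x, ~ In x L -> chk D (CExt Psi x Par A) (open_nrm 0 x M) (open_typ 0 x B)) ->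
    chk D Psi (Lam M) (PiP A B)
| chk_neu : forall D Psi R P, syn D Psi R (TAtom P) -> chk D Psi (NRet R) (TAtom P)
with syn : mctx -> lctx -> neu -> typ -> Prop :=
| syn_var : forall D Psi x k A, lin Psi x k A -> syn D Psi (FVar x) A
| syn_const : forall D Psi c A, In (c, A) Sigma -> syn D Psi (Const c) A
| syn_app_pi : forall D Psi R N A B B',
    syn D Psi R (PiP A B) -> chk D Psi N A -> hsubst_typ N B B' -> syn D Psi (App R N) B'
| syn_app_arr : forall D Psi R N A B,
    syn D Psi R (Arr A B) -> chk D Psi N A -> syn D Psi (App R N) B
| syn_mvar : forall D Psi u s Phi P P',
    In (u, MTyp Phi P) D -> chks D Psi s Phi -> ssubst_atyp Phi s P P' ->
    syn D Psi (MVar (MF u) s) (TAtom P')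
with chks : mctx -> lctx -> sub -> lctx -> Prop :=
| chks_nil : forall D Psi, chks D Psi SNil CNil
| chks_wk : forall D Psi psi, root Psi = Some psi -> chks D Psi (SWk psi) (CVar psi)
| chks_cons : forall D Psi s Phi x k B B' M,
    chks D Psi s Phi -> ssubst_typ Phi s B B' -> chk D Psi M B' ->
    chks D Psi (SCons s M) (CExt Phi x k B).

(* Delta ||- C <= U *)
Definition mchk (D : mctx) (C : mterm) (U : mtyp) : Prop :=
  match C, U with
  | CTm h R, MTyp Psi P => h = hat Psi /\ chk D Psi (NRet R) (TAtom P)
  | CCtx Psi, MSch G => schk D Psi G
  | _, _ => False
  end.

(* Sequent calculus for contextual LF:  Delta; Psi ==> A  and  Delta; Psi ==> sigma : Phi *)
Inductive lseq : mctx -> lctx -> typ -> Prop :=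
| seq_init_sig : forall D Psi c A, In (c, A) Sigma -> lseq D Psi A
| seq_init_psi : forall D Psi x A, lin Psi x Rel A -> lseq D Psi A
| seq_PiR : forall D Psi A B (L : list name),
    (forall x, ~ In x L -> lseq D (CExt Psi x Par A) (open_typ 0 x B)) ->
    lseq D Psi (PiP A B)
| seq_PiL : forall D Psi x1 A B M B' A' (L : list name),
    lin Psi x1 Rel (PiP A B) -> chk D Psi M A -> hsubst_typ M B B' ->
    (forall x2, ~ In x2 L -> lseq D (CExt Psi x2 Rel B') A') ->
    lseq D Psi A'
| seq_ArrR : forall D Psi A B (L : list name),
    (forall x, ~ In x L -> lseq D (CExt Psi x Rel A) B) ->
    lseq D Psi (Arr A B)
| seq_ArrL : forall D Psi x1 A B A' (L : list name),
    lin Psi x1 Rel (Arr A B) -> lseq D Psi A ->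
    (forall x2, ~ In x2 L -> lseq D (CExt Psi x2 Rel B) A') ->
    lseq D Psi A'
| seq_reflect : forall D Psi u Phi P s P' A (L : list name),
    In (u, MTyp Phi P) D -> ssq D Psi s Phi -> ssubst_atyp Phi s P P' ->
    (forall x, ~ In x L -> lseq D (CExt Psi x Rel (TAtom P')) A) ->
    lseq D Psi A
with ssq : mctx -> lctx -> sub -> lctx -> Prop :=
| ssq_nil : forall D Psi, ssq D Psi SNil CNil
| ssq_wk : forall D Psi psi, root Psi = Some psi -> ssq D Psi (SWk psi) (CVar psi)
| ssq_rel : forall D Psi s Phi x B B' N,
    ssq D Psi s Phi -> ssubst_typ Phi s B B' -> lseq D Psi B' ->
    ssq D Psi (SCons s N) (CExt Phi x Rel B)
| ssq_par : forall D Psi s Phi x B B' M,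
    ssq D Psi s Phi -> ssubst_typ Phi s B B' -> chk D Psi M B' ->
    ssq D Psi (SCons s M) (CExt Phi x Par B).

(* Sequent calculus for computations:  Delta; Gamma ==> tau *)
Inductive cseq : mctx -> cctx -> ctyp -> Prop :=
| cseq_PiBoxR : forall D G U t (L : list name),
    (forall X, ~ In X L -> cseq ((X, U) :: D) G (mopen_ctyp 0 X t)) ->
    cseq D G (PiBox U t)
| cseq_PiBoxL : forall D G y1 U t' C t'' y2 t,
    In (y1, PiBox U t') G -> mchk D C U -> msubst_ctyp C t' t'' ->
    cseq D ((y2, t'') :: G) t -> cseq D G t
| cseq_ArrL : forall D G y1 t1 t2 y2 t,
    In (y1, CArr t1 t2) G -> cseq D G t1 -> cseq D ((y2, t2) :: G) t -> cseq D G t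
| cseq_ArrR : forall D G y t1 t2,
    cseq D ((y, t1) :: G) t2 -> cseq D G (CArr t1 t2)
| cseq_init : forall D G y t, In (y, t) G -> cseq D G t
| cseq_BoxR : forall D G Psi P, lseq D Psi (TAtom P) -> cseq D G (Box Psi P)
| cseq_BoxL : forall D G y Psi P t (L : list name),
    In (y, Box Psi P) G ->
    (forall X, ~ In X L -> cseq ((X, MTyp Psi P) :: D) G t) ->
    cseq D G t.

(* useq D Psi A : Delta; Psi ==u A ;  ussq : Delta; Psi ==u sigma : Phi ;
   foc D Psi x A P : Delta; Psi > x:A =>> P *)
Inductive useq : mctx -> lctx -> typ -> Prop :=
| useq_PiR : forall D Psi A B (L : list name),
    (forall x, ~ In x L -> useq D (CExt Psi x Par A) (open_typ 0 x B)) ->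
    useq D Psi (PiP A B)
| useq_ArrR : forall D Psi A B (L : list name),
    (forall x, ~ In x L -> useq D (CExt Psi x Rel A) B) ->
    useq D Psi (Arr A B)
| useq_transD : forall D Psi X Phi Q s P,
    In (X, MTyp Phi Q) D -> ussq D Psi s Phi -> ssubst_atyp Phi s Q P ->
    useq D Psi (TAtom P)
| useq_transPsi : forall D Psi x A P,
    lin Psi x Rel A -> foc D Psi x A P -> useq D Psi (TAtom P)
with ussq : mctx -> lctx -> sub -> lctx -> Prop :=
| ussq_nil : forall D Psi, ussq D Psi SNil CNil
| ussq_wk : forall D Psi psi, root Psi = Some psi -> ussq D Psi (SWk psi) (CVar psi)
| ussq_rel : forall D Psi s Phi x B B' N,
    ussq D Psi s Phi -> ssubst_typ Phi s B B' -> useq D Psi B' ->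
    ussq D Psi (SCons s N) (CExt Phi x Rel B)
| ussq_par : forall D Psi s Phi x B B' M,
    ussq D Psi s Phi -> ssubst_typ Phi s B B' -> chk D Psi M B' ->
    ussq D Psi (SCons s M) (CExt Phi x Par B)
with foc : mctx -> lctx -> name -> typ -> atyp -> Prop :=
| foc_init : forall D Psi x P, foc D Psi x (TAtom P) P
| foc_ArrL : forall D Psi x A B P (L : list name),
    useq D Psi A ->
    (forall x', ~ In x' L -> foc D Psi x' B P) ->
    foc D Psi x (Arr A B) P
| foc_PiL : forall D Psi x A B M B' P (L : list name),
    chk D Psi M A -> hsubst_typ M B B' ->
    (forall x', ~ In x' L -> foc D Psi x' B' P) ->
    foc D Psi x (PiP A B) P.

(* Delta > X:U; Psi =>> P *)
Definition mfoc (D : mctx) (X : name) (U : mtyp) (Psi : lctx) (P : atyp) : Prop :=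
  exists Phi Q s, U = MTyp Phi Q /\ ussq ((X, U) :: D) Psi s Phi /\ ssubst_atyp Phi s Q P.

(* ur D G t : Delta; Gamma ==R tau ;
   ul D G G' Psi P : Delta; Gamma >> Gamma' ==L [Psi |- P] ;
   cfoc D G y t Psi P : Delta; Gamma > y:tau => [Psi |- P] *)
Inductive ur : mctx -> cctx -> ctyp -> Prop :=
| ur_ArrR : forall D G y t1 t2, ur D ((y, t1) :: G) t2 -> ur D G (CArr t1 t2)
| ur_PiBoxR : forall D G U t (L : list name),
    (forall X, ~ In X L -> ur ((X, U) :: D) G (mopen_ctyp 0 X t)) ->
    ur D G (PiBox U t)
| ur_l2r : forall D G Psi P, ul D [] G Psi P -> ur D G (Box Psi P)
with ul : mctx -> cctx -> cctx -> lctx -> atyp -> Prop :=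
| ul_BoxL : forall D G G' y Phi Q Psi P (L : list name),
    (forall X, ~ In X L -> ul ((X, MTyp Phi Q) :: D) G G' Psi P) ->
    ul D G ((y, Box Phi Q) :: G') Psi P
| ul_shift : forall D G G' y t Psi P,
    ~ is_box t -> ul D ((y, t) :: G) G' Psi P -> ul D G ((y, t) :: G') Psi P
| ul_level : forall D G Psi P, useq D Psi (TAtom P) -> ul D G [] Psi P
| ul_focus : forall D G y t Psi P,
    In (y, t) G -> cfoc D G y t Psi P -> ul D G [] Psi P
with cfoc : mctx -> cctx -> name -> ctyp -> lctx -> atyp -> Prop :=
| cfoc_PiBoxL : forall D G y U t C t' y' Psi P,
    mchk D C U -> msubst_ctyp C t t' -> cfoc D G y' t' Psi P ->
    cfoc D G y (PiBox U t) Psi P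
| cfoc_ArrL : forall D G y t1 t2 y' Psi P,
    ur D G t1 -> cfoc D G y' t2 Psi P -> cfoc D G y (CArr t1 t2) Psi P
| cfoc_blur : forall D G y' Phi Q Psi P,
    ul D [] ((y', Box Phi Q) :: G) Psi P -> cfoc D G y' (Box Phi Q) Psi P.

End Judgments.

(* A focus on x:A is read as the proof-relevant assumption x:A, so that the
   focused left rules become ordinary left rules on that assumption and
   init closes the focus; transition^Delta is reflect followed by init;
   and the unfocused zone Gamma' of the left-uniform judgment is just part of
   the computation context.  The only structural fact needed is weakening of
   both sequent calculi. *)

From Stdlib Require Import List Permutation.
Import ListNotations.

Scheme chk_ind' := Induction for chk Sort Prop
  with syn_ind' := Induction for syn Sort Prop
  with chks_ind' := Induction for chks Sort Prop.
Combined Scheme chk_mut from chk_ind', syn_ind', chks_ind'.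
Scheme lseq_ind' := Induction for lseq Sort Prop
  with ssq_ind' := Induction for ssq Sort Prop.
Combined Scheme lseq_mut from lseq_ind', ssq_ind'.
Scheme useq_ind' := Induction for useq Sort Prop
  with ussq_ind' := Induction for ussq Sort Prop
  with foc_ind' := Induction for foc Sort Prop.
Combined Scheme useq_mut from useq_ind', ussq_ind', foc_ind'.
Scheme ur_ind' := Induction for ur Sort Prop
  with ul_ind' := Induction for ul Sort Prop
  with cfoc_ind' := Induction for cfoc Sort Prop.
Combined Scheme ur_mut from ur_ind', ul_ind', cfoc_ind'.

(* The root must be preserved because the wk_psi rules look at it. *)
Definition lctx_incl (Psi Psi' : lctx) : Prop :=
  (forall x k A, lin Psi x k A -> lin Psi' x k A) /\ root Psi = root Psi'.

Lemma lin_incl Psi Psi' x k A :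
  lctx_incl Psi Psi' -> lin Psi x k A -> lin Psi' x k A.
Proof. intros [Hlin _]; auto. Qed.

Lemma lctx_incl_ext Psi Psi' x k A :
  lctx_incl Psi Psi' -> lctx_incl (CExt Psi x k A) (CExt Psi' x k A).
Proof.
  intros [Hlin Hroot]; split; simpl; auto.
  intros y k' B [Hy | Hy]; auto.
Qed.

Lemma lctx_incl_extr Psi x k A : lctx_incl Psi (CExt Psi x k A).
Proof. split; simpl; auto. Qed.

Lemma lctx_incl_contract Psi x k A :
  lin Psi x k A -> lctx_incl (CExt Psi x k A) Psi.
Proof.
  intros Hx; split; simpl; auto.
  intros y k' B [(-> & -> & ->) | Hy]; auto.
Qed.

Section LF.
Variable Sigma : signature.

Lemma chk_syn_chks_weaken :
  (forall D Psi M A, chk Sigma D Psi M A ->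
     forall Psi', lctx_incl Psi Psi' -> chk Sigma D Psi' M A) /\
  (forall D Psi R A, syn Sigma D Psi R A ->
     forall Psi', lctx_incl Psi Psi' -> syn Sigma D Psi' R A) /\
  (forall D Psi s Phi, chks Sigma D Psi s Phi ->
     forall Psi', lctx_incl Psi Psi' -> chks Sigma D Psi' s Phi).
Proof.
  apply chk_mut; intros.
  - apply chk_lam_arr with (L := L); eauto using lctx_incl_ext.
  - apply chk_lam_pi with (L := L); eauto using lctx_incl_ext.
  - apply chk_neu; auto.
  - eapply syn_var, lin_incl; eauto.
  - eapply syn_const; eauto.
  - eapply syn_app_pi; eauto.
  - eapply syn_app_arr; eauto.
  - eapply syn_mvar; eauto.
  - apply chks_nil.
  - apply chks_wk; destruct H as [_ Hroot]; congruence.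
  - eapply chks_cons; eauto.
Qed.

Lemma chk_weaken D Psi Psi' M A :
  lctx_incl Psi Psi' -> chk Sigma D Psi M A -> chk Sigma D Psi' M A.
Proof. intros Hincl HM; exact (proj1 chk_syn_chks_weaken _ _ _ _ HM _ Hincl). Qed.

Lemma lseq_ssq_weaken :
  (forall D Psi A, lseq Sigma D Psi A ->
     forall Psi', lctx_incl Psi Psi' -> lseq Sigma D Psi' A) /\
  (forall D Psi s Phi, ssq Sigma D Psi s Phi ->
     forall Psi', lctx_incl Psi Psi' -> ssq Sigma D Psi' s Phi).
Proof.
  apply lseq_mut; intros.
  - eapply seq_init_sig; eauto.
  - eapply seq_init_psi, lin_incl; eauto.
  - apply seq_PiR with (L := L); eauto using lctx_incl_ext.
  - eapply seq_PiL with (L := L);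
      eauto using lctx_incl_ext, chk_weaken, lin_incl.
  - apply seq_ArrR with (L := L); eauto using lctx_incl_ext.
  - eapply seq_ArrL with (L := L); eauto using lctx_incl_ext, lin_incl.
  - eapply seq_reflect with (L := L); eauto using lctx_incl_ext.
  - apply ssq_nil.
  - apply ssq_wk; destruct H as [_ Hroot]; congruence.
  - eapply ssq_rel; eauto.
  - eapply ssq_par; eauto using chk_weaken.
Qed.

Lemma lseq_weaken D Psi Psi' A :
  lctx_incl Psi Psi' -> lseq Sigma D Psi A -> lseq Sigma D Psi' A.
Proof. intros Hincl HA; exact (proj1 lseq_ssq_weaken _ _ _ HA _ Hincl). Qed.

Lemma lseq_reflect_atom D Psi u Phi P s P' :
  In (u, MTyp Phi P) D -> ssq Sigma D Psi s Phi -> ssubst_atyp Phi s P P' ->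
  lseq Sigma D Psi (TAtom P').
Proof.
  intros Hu Hs HP; eapply seq_reflect with (L := []); eauto.
  intros x _; eapply seq_init_psi; left; eauto.
Qed.

Lemma lf_focusing_sound :
  (forall D Psi A, useq Sigma D Psi A -> lseq Sigma D Psi A) /\
  (forall D Psi s Phi, ussq Sigma D Psi s Phi -> ssq Sigma D Psi s Phi) /\
  (forall D Psi x A P, foc Sigma D Psi x A P ->
     lseq Sigma D (CExt Psi x Rel A) (TAtom P)).
Proof.
  apply useq_mut; intros.
  - apply seq_PiR with (L := L); auto.
  - apply seq_ArrR with (L := L); auto.
  - eapply lseq_reflect_atom; eauto.
  - eapply lseq_weaken; eauto using lctx_incl_contract.
  - apply ssq_nil.
  - apply ssq_wk; auto.
  - eapply ssq_rel; eauto.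
  - eapply ssq_par; eauto.
  - eapply seq_init_psi; left; eauto.
  - eapply seq_ArrL with (x1 := x) (L := L); [left; eauto | |].
    + apply lseq_weaken with Psi; auto using lctx_incl_extr.
    + intros x2 Hx2; apply lseq_weaken with (CExt Psi x2 Rel B);
        auto using lctx_incl_ext, lctx_incl_extr.
  - eapply seq_PiL with (x1 := x) (L := L); [left; eauto | | eauto |].
    + apply chk_weaken with Psi; auto using lctx_incl_extr.
    + intros x2 Hx2; apply lseq_weaken with (CExt Psi x2 Rel B');
        auto using lctx_incl_ext, lctx_incl_extr.
Qed.

Lemma mfoc_sound D X U Psi P :
  mfoc Sigma D X U Psi P -> lseq Sigma ((X, U) :: D) Psi (TAtom P).
Proof.
  intros (Phi & Q & s & -> & Hs & HP).
  eapply lseq_reflect_atom; [left; eauto | apply lf_focusing_sound; eauto | eauto].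
Qed.

End LF.

Section Computations.
Variable Sigma : signature.
Variable schk : mctx -> lctx -> name -> Prop.

Lemma cseq_weaken D G G' t :
  incl G G' -> cseq Sigma schk D G t -> cseq Sigma schk D G' t.
Proof.
  intros Hincl Ht; revert G' Hincl; induction Ht; intros G'' Hincl.
  - apply cseq_PiBoxR with (L := L); auto.
  - eapply cseq_PiBoxL; eauto.
    apply IHHt, incl_cons; [apply in_eq | apply incl_tl; auto].
  - eapply cseq_ArrL; eauto.
    apply IHHt2, incl_cons; [apply in_eq | apply incl_tl; auto].
  - eapply cseq_ArrR, IHHt, incl_cons; [apply in_eq | apply incl_tl; auto].
  - eapply cseq_init; eauto.
  - apply cseq_BoxR; auto.
  - eapply cseq_BoxL with (L := L); eauto.
Qed.

Lemma cseq_cons D G b t :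
  cseq Sigma schk D G t -> cseq Sigma schk D (b :: G) t.
Proof. apply cseq_weaken, incl_tl, incl_refl. Qed.

Lemma cseq_cons_under D G a b t :
  cseq Sigma schk D (a :: G) t -> cseq Sigma schk D (a :: b :: G) t.
Proof.
  apply cseq_weaken, incl_cons; [apply in_eq | do 2 apply incl_tl; apply incl_refl].
Qed.

Lemma computation_focusing_sound :
  (forall D G t, ur Sigma schk D G t -> cseq Sigma schk D G t) /\
  (forall D G G' Psi P, ul Sigma schk D G G' Psi P ->
     cseq Sigma schk D (G' ++ G) (Box Psi P)) /\
  (forall D G y t Psi P, cfoc Sigma schk D G y t Psi P ->
     cseq Sigma schk D ((y, t) :: G) (Box Psi P)).
Proof.
  apply ur_mut; intros.
  - eapply cseq_ArrR; eauto.
  - apply cseq_PiBoxR with (L := L); auto.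
  - rewrite app_nil_r in H; auto.
  - eapply cseq_BoxL with (L := L); [apply in_eq |].
    intros X HX; apply cseq_cons; auto.
  - eapply cseq_weaken; [| eauto].
    intros a; apply Permutation_in, Permutation_sym, Permutation_middle.
  - apply cseq_BoxR, lf_focusing_sound; auto.
  - eapply cseq_weaken; [apply incl_cons; [eauto | apply incl_refl] | eauto].
  - eapply cseq_PiBoxL; [apply in_eq | eauto | eauto |].
    apply cseq_cons_under; eauto.
  - eapply cseq_ArrL; [apply in_eq | apply cseq_cons; auto |].
    apply cseq_cons_under; eauto.
  - rewrite app_nil_r in H; auto.
Qed.

End Computations.

Theorem mainTheorem2 (Sigma : signature) (schk : mctx -> lctx -> name -> Prop) :
  (* (a) *)
  (forall (D : mctx) (Psi : lctx) (A : typ),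
      useq Sigma D Psi A -> lseq Sigma D Psi A) /\
  (* (b) *)
  (forall (D : mctx) (Psi : lctx) (s : sub) (Phi : lctx),
      ussq Sigma D Psi s Phi -> ssq Sigma D Psi s Phi) /\
  (* (c) *)
  (forall (D : mctx) (Psi : lctx) (x : name) (A : typ) (P : atyp),
      foc Sigma D Psi x A P -> lseq Sigma D (CExt Psi x Rel A) (TAtom P)) /\
  (* (d) *)
  (forall (D : mctx) (X : name) (U : mtyp) (Psi : lctx) (P : atyp),
      mfoc Sigma D X U Psi P -> lseq Sigma ((X, U) :: D) Psi (TAtom P)) /\
  (* (e) *)
  (forall (D : mctx) (G : cctx) (t : ctyp),
      ur Sigma schk D G t -> cseq Sigma schk D G t) /\
  (* (f) *)
  (forall (D : mctx) (G G' : cctx) (Psi : lctx) (P : atyp),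
      ul Sigma schk D G G' Psi P -> cseq Sigma schk D (G' ++ G) (Box Psi P)) /\
  (* (g) *)
  (forall (D : mctx) (G : cctx) (y : name) (t : ctyp) (Psi : lctx) (P : atyp),
      cfoc Sigma schk D G y t Psi P -> cseq Sigma schk D ((y, t) :: G) (Box Psi P)).
Proof.
  destruct (lf_focusing_sound Sigma) as (Huseq & Hussq & Hfoc).
  destruct (computation_focusing_sound Sigma schk) as (Hur & Hul & Hcfoc).
  repeat split; auto.
  exact (mfoc_sound Sigma).
Qed.
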